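(* Let $G$ be a finite simple graph on $n\ge 2$ vertices. Then $\alpha(G)=2$ if and only if $\alpha_q(G)=2$.
   Context: $\alpha(G)$ denotes the independence number of $G$. For a finite simple graph $X$ and positive integers $s,d$, a quantum $s$-coclique matrix (in dimension $d$) is a $|V(X)|\times s$ array $P=(P_{vi})_{v\in V(X),\, i\in[s]}$ of orthogonal projections $P_{vi}\in\mathbb{C}^{d\times d}$ such that (a) $\sum_{v\in V(X)}P_{vi}=I_d$ for every $i\in[s]$; (b) $P_{vi}P_{uj}=0$ for all $i\neq j$ in $[s]$ and all adjacent vertices $u\sim v$; (c) $P_{vi}P_{vj}=0$ for all $v\in V(X)$ and all $i\neq j$ in $[s]$. The quantum independence number $\alpha_q(X)$ is the largest $s$ such that a quantum $s$-coclique matrix for $X$ exists for some $d\ge 1$. *)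

From HB Require Import structures.
From mathcomp Require Import all_boot all_order all_algebra.
From mathcomp Require Import complex.
From mathcomp Require Import Rstruct.
Set Implicit Arguments. Unset Strict Implicit. Unset Printing Implicit Defensive.
Import Order.TTheory GRing.Theory Num.Theory.
Local Open Scope ring_scope.

Definition CC : numClosedFieldType := (Rdefinitions.R)[i].

Definition adjmx (d : nat) (A : 'M[CC]_d) : 'M[CC]_d := map_mx Num.conj (A^T).

Definition is_orth_proj (d : nat) (P : 'M[CC]_d) : Prop :=
  P *m P = P /\ adjmx P = P.

Definition simple_graph (T : finType) (e : rel T) : Prop :=
  symmetric e /\ irreflexive e.

Definition independent (T : finType) (e : rel T) (A : {set T}) : bool :=
  [forall x in A, forall y in A, ~~ e x y].

Definition alpha (T : finType) (e : rel T) : nat :=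
  \max_(A : {set T} | independent e A) #|A|.

Definition quantum_coclique (T : finType) (e : rel T) (s d : nat)
    (P : T -> 'I_s -> 'M[CC]_d) : Prop :=
  [/\ (forall v i, is_orth_proj (P v i)),
      (forall i, \sum_(v : T) P v i = 1%:M),
      (forall (i j : 'I_s) (u v : T), i != j -> e u v -> P v i *m P u j = 0)
    & (forall (v : T) (i j : 'I_s), i != j -> P v i *m P v j = 0)].

Definition has_quantum_coclique (T : finType) (e : rel T) (s : nat) : Prop :=
  exists d : nat, (1 <= d)%N /\ exists P : T -> 'I_s -> 'M[CC]_d,
    @quantum_coclique T e s d P.

(* alpha_q(X) = k : k is the largest positive s admitting a quantum
   s-coclique matrix (in some dimension d >= 1). *)
Definition alpha_q_eq (T : finType) (e : rel T) (k : nat) : Prop :=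
  [/\ (1 <= k)%N, has_quantum_coclique e k &
      forall s : nat, (k < s)%N -> ~ has_quantum_coclique e s].

From mathcomp Require Import all_boot all_order all_algebra.
Set Implicit Arguments. Unset Strict Implicit. Unset Printing Implicit Defensive.
Import Order.TTheory GRing.Theory Num.Theory.
Local Open Scope ring_scope.

(* An independent set of size s gives a quantum s-coclique matrix of 0/1
   scalars, so alpha <= alpha_q. Conversely, fix a vertex v and two colours
   i != j. Conditions (b) and (c) kill P u i P v j whenever u = v or u ~ v, so
   summing (a) over u gives Q_i P v j = P v j, where Q_i is the sum of P u i
   over the non-neighbours u of v. If G is complete, Q_i = 0; if alpha(G) <= 2,
   the non-neighbours of v form a clique, so Q_i Q_k = 0 for a third colour k
   and P v j = Q_i Q_k P v j = 0. Either way column j of P sums to 0, not to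
   the identity, so alpha(G) < 2 excludes quantum 2-cocliques and
   alpha(G) <= 2 excludes quantum 3-cocliques. *)

Definition non_neighbour (T : finType) (e : rel T) (v u : T) : bool :=
  (u != v) && ~~ e v u.

Definition clique (T : finType) (e : rel T) (S : pred T) : Prop :=
  forall u w, S u -> S w -> u != w -> e u w.

Section QuantumCocliqueMatrix.
Variables (T : finType) (e : rel T) (s d : nat) (P : T -> 'I_s -> 'M[CC]_d).
Hypothesis qP : quantum_coclique e P.

Lemma sum_non_neighbour_mul_proj (i j : 'I_s) (v : T) : i != j ->
  (\sum_(u | non_neighbour e v u) P u i) *m P v j = P v j.
Proof.
have [_ sumP adjP diagP] := qP; move=> ij.
have others0 : (\sum_(u | ~~ non_neighbour e v u) P u i) *m P v j = 0.
  rewrite mulmx_suml big1 // => u; rewrite negb_and !negbK.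
  by case/orP=> [/eqP-> | evu]; [exact: diagP | exact: adjP].
have := congr1 (mulmx^~ (P v j)) (sumP i).
by rewrite mul1mx (bigID (non_neighbour e v)) /= mulmxDl others0 addr0.
Qed.

Lemma sum_clique_mul_eq0 (S : pred T) (i k : 'I_s) : clique e S -> i != k ->
  (\sum_(u | S u) P u i) *m (\sum_(w | S w) P w k) = 0.
Proof.
have [_ _ adjP diagP] := qP; move=> cliqueS ik.
rewrite mulmx_suml big1 // => u Su; rewrite mulmx_sumr big1 // => w Sw.
have [<- | uw] := eqVneq u w; first exact: diagP.
by apply: adjP ik _; apply: cliqueS; rewrite // eq_sym.
Qed.

Lemma quantum_coclique_dim0 (j : 'I_s) : (forall v, P v j = 0) -> d = 0%N.
Proof.
have [_ sumP _ _] := qP; move=> col0.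
have one0 : (1%:M : 'M[CC]_d) = 0 by rewrite -(sumP j) big1.
by rewrite -(mxrank1 CC d) one0 mxrank0.
Qed.

Lemma quantum_coclique_complete_dim0 :
  (forall u v, u != v -> e u v) -> (1 < s)%N -> d = 0%N.
Proof.
move=> complete s_gt1.
apply: (@quantum_coclique_dim0 (Ordinal s_gt1)) => v.
rewrite -(@sum_non_neighbour_mul_proj (Ordinal (ltnW s_gt1))) //.
rewrite big_pred0 ?mul0mx // => u.
apply/negbTE; rewrite negb_and negbK.
by have [// | uv] := eqVneq u v; rewrite complete // eq_sym.
Qed.

Lemma quantum_coclique_clique_non_neighbours_dim0 :
  (forall v, clique e (non_neighbour e v)) -> (2 < s)%N -> d = 0%N.
Proof.
move=> cliqueN s_gt2.
have s_gt1 := ltnW s_gt2; have s_gt0 := ltnW s_gt1.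
pose i : 'I_s := Ordinal s_gt0; pose k : 'I_s := Ordinal s_gt1.
apply: (@quantum_coclique_dim0 (Ordinal s_gt2)) => v.
rewrite -(@sum_non_neighbour_mul_proj i) // -(@sum_non_neighbour_mul_proj k) //.
by rewrite mulmxA sum_clique_mul_eq0 ?mul0mx.
Qed.

End QuantumCocliqueMatrix.

Section IndependenceNumber.
Variables (T : finType) (e : rel T).

Lemma independentP (A : {set T}) :
  reflect (forall x y, x \in A -> y \in A -> ~~ e x y) (independent e A).
Proof.
apply: (iffP forallP) => [indA x y xA yA | indA x].
  by move: (indA x); rewrite xA => /forallP/(_ y); rewrite yA.
by apply/implyP => xA; apply/forallP => y; apply/implyP; exact: indA.
Qed.

Lemma independent_has_quantum_coclique (A : {set T}) :
  independent e A -> has_quantum_coclique e #|A|.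
Proof.
move=> /independentP indA; exists 1%N; split=> //.
pose a := @enum_val T (mem A).
exists (fun v i => if v == a i then 1%:M else 0); split.
- move=> v i; case: ifP => _; split; rewrite ?mul1mx ?mul0mx //.
  by apply/matrixP => p q; rewrite !mxE conjC_nat eq_sym.
  by apply/matrixP => p q; rewrite !mxE rmorph0.
- move=> i; rewrite (bigD1 (a i)) //= eqxx.
  rewrite [X in _ + X](_ : _ = 0 :> 'M[CC]_1) ?addr0 //.
  by apply: big1 => v /negbTE ->.
- move=> i j u v ij euv.
  have [vi | _] := eqVneq v (a i); last by rewrite mul0mx.
  have [uj | _] := eqVneq u (a j); last by rewrite mulmx0.
  by move: (indA (a j) (a i) (enum_valP j) (enum_valP i)); rewrite -uj -vi euv.
- move=> v i j ij.
  have [vi | _] := eqVneq v (a i); last by rewrite mul0mx.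
  have [vj | _] := eqVneq v (a j); last by rewrite mulmx0.
  by move: ij; rewrite (enum_val_inj (etrans (esym vi) vj)) eqxx.
Qed.

Lemma alpha_attained : exists2 A : {set T}, independent e A & #|A| = alpha e.
Proof.
have [|A indA alphaA] := @eq_bigmax_cond _ (independent e) (fun A => #|A|).
  by apply/card_gt0P; exists set0; apply/independentP => x y; rewrite inE.
by exists A; last exact: esym alphaA.
Qed.

Lemma alpha_le_of_no_quantum_coclique (k : nat) :
  (forall s, (k < s)%N -> ~ has_quantum_coclique e s) -> (alpha e <= k)%N.
Proof.
move=> noq; apply/bigmax_leqP => A /independent_has_quantum_coclique qA.
by rewrite leqNgt; apply/negP => /noq.
Qed.

Hypotheses (e_sym : symmetric e) (e_irr : irreflexive e).

Lemma independent2 (x y : T) : ~~ e x y -> independent e [set x; y].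
Proof.
move=> nexy; apply/independentP => p q.
by rewrite !inE => /orP[]/eqP-> /orP[]/eqP->; rewrite ?e_irr // e_sym.
Qed.

Lemma complete_of_alpha_lt2 : (alpha e < 2)%N -> forall u v, u != v -> e u v.
Proof.
move=> alpha_lt2 u v uv; apply: contraTT alpha_lt2 => /independent2 ind2.
by rewrite -leqNgt (leq_trans _ (leq_bigmax_cond _ ind2)) // cards2 uv.
Qed.

Lemma clique_non_neighbours_of_alpha_le2 :
  (alpha e <= 2)%N -> forall v, clique e (non_neighbour e v).
Proof.
move=> alpha_le2 v u w /andP[uv nevu] /andP[wv nevw] uw.
apply: contraTT alpha_le2 => neuw.
have ind3 : independent e (v |: [set u; w]).
  apply/independentP => p q; rewrite !inE.
  by move=> /orP[|/orP[]]/eqP-> /orP[|/orP[]]/eqP->;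
    rewrite ?e_irr // ?(e_sym u v) ?(e_sym w v) ?(e_sym w u).
rewrite -ltnNge (leq_trans _ (leq_bigmax_cond _ ind3)) //.
by rewrite cardsU1 cards2 uw !inE negb_or eq_sym uv eq_sym wv.
Qed.

End IndependenceNumber.

Theorem mainTheorem7 (T : finType) (e : rel T) :
  simple_graph e -> (2 <= #|T|)%N ->
  (alpha e = 2%N <-> alpha_q_eq e 2).
Proof.
move=> [e_sym e_irr] _; split=> [alpha2 | [_ q2 noq]].
- have [A indA cardA] := alpha_attained e.
  split=> //; first by rewrite -alpha2 -cardA; exact: independent_has_quantum_coclique indA.
  move=> s s_gt2 [d [d_gt0 [P qP]]].
  have cliqueN := clique_non_neighbours_of_alpha_le2 e_sym e_irr (eq_leq alpha2).
  by move: d_gt0; rewrite (quantum_coclique_clique_non_neighbours_dim0 qP cliqueN).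
- apply/eqP; rewrite eqn_leq (alpha_le_of_no_quantum_coclique noq) /=.
  rewrite leqNgt; apply/negP => /(complete_of_alpha_lt2 e_sym e_irr) complete.
  have [d [d_gt0 [P qP]]] := q2.
  by move: d_gt0; rewrite (quantum_coclique_complete_dim0 qP complete).
Qed.
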